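(* Let $p$ be an odd prime, let $v$ be an integer with $1<v<p-1$, and let $g\in\{2,\dots,p-1\}$ be a primitive root modulo $p$. Define the sequence $\gamma_v=(\gamma_v(i))_{i=1}^{p-1}$ by $\gamma_v(i)=\big(g^{i-1}\,\%\,p\big)\,\%\,v$. Then $\gamma_v$, regarded as a periodic sequence of length $p-1$, has least period exactly $p-1$.
   Context: For integers $x$ and $m\ge 1$, $x\,\%\,m$ denotes the least nonnegative remainder of $x$ upon division by $m$ (so $g^{i-1}\,\%\,p\in\{1,\dots,p-1\}$ is read as an ordinary integer before reducing modulo $v$). A sequence $s$ of length $N$ is regarded as indexed cyclically (indices modulo $N$); its least period is the smallest integer $\rho>0$ with $s(i+\rho)=s(i)$ for all indices $i$ (indices taken modulo $N$). *)

From mathcomp Require Import all_boot.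
Set Implicit Arguments. Unset Strict Implicit. Unset Printing Implicit Defensive.

Definition primitive_root_mod (p g : nat) : Prop :=
  coprime g p /\ g ^ (p.-1) = 1 %[mod p] /\
  (forall k, 0 < k < p.-1 -> g ^ k <> 1 %[mod p]).

(* gamma_v(i) = (g^(i-1) % p) % v, for i = 1..p-1. We index from 0:
   gamma_seq p g v j = gamma_v(j+1) = (g^j % p) % v, j = 0..p-2. *)
Definition gamma_seq (p g v : nat) (j : nat) : nat := (g ^ j %% p) %% v.

Definition is_cyc_period (N : nat) (s : nat -> nat) (rho : nat) : Prop :=
  0 < rho /\ forall i, i < N -> s ((i + rho) %% N) = s i.

Definition least_cyc_period (N : nat) (s : nat -> nat) (rho : nat) : Prop :=
  is_cyc_period N s rho /\ forall r, is_cyc_period N s r -> rho <= r.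

(* If r < p - 1 were a period, h := g^r mod p would differ from 1. As the powers
   g^j run through all nonzero residues modulo p, multiplication by h modulo p
   would then preserve every x in 1..p-1 modulo v. For x = 1 this gives
   h = 1 (mod v); for x = p/h + 1, the least x with x h > p, it gives
   x h - p = x = x h (mod v). *)

From mathcomp Require Import all_boot zify.

Set Implicit Arguments.
Unset Strict Implicit.

Lemma muln_modp_congr_modv_eq1 (p v h : nat) : ~~ (v %| p) -> 0 < h < p ->
  (forall x, 0 < x < p -> x * h %% p = x %[mod v]) -> h = 1.
Proof.
move=> v_ndvd_p /andP[h_gt0 h_lt_p] h_congr.
have h_1 : h = 1 %[mod v].
  by rewrite -[in LHS](modn_small h_lt_p) -[h]mul1n h_congr //; lia.
apply/eqP; rewrite eqn_leq h_gt0 andbT leqNgt; apply/negP => h_gt1.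
have p_eq := divn_eq p h; have p_mod_lt := ltn_pmod p h_gt0.
have q_le : p %/ h * 2 <= p %/ h * h by rewrite leq_mul2l h_gt1 orbT.
set x := p %/ h + 1.
have xh_eq : x * h = p %/ h * h + h by rewrite mulnDl mul1n.
have x_range : 0 < x < p by lia.
have xh_mod : x * h %% p = x * h - p.
  by rewrite -[in LHS](subnK (_ : p <= x * h)) ?modnDr ?modn_small; lia.
have : x * h == x * h - p %[mod v].
  by rewrite -xh_mod h_congr // -modnMmr h_1 modnMmr muln1.
by rewrite eqn_mod_dvd ?leq_subr // subKn; [rewrite (negbTE v_ndvd_p) | lia].
Qed.

Section PrimitiveRoot.

Variables p g : nat.
Hypotheses (p_prime : prime p) (g_prim : primitive_root_mod p g).

Lemma primitive_root_expn_mod_gt0 j : 0 < g ^ j %% p.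
Proof.
have [g_coprime _] := g_prim.
by rewrite lt0n -/(dvdn p _) -prime_coprime // coprime_sym coprimeXl.
Qed.

Lemma primitive_root_expn_modp k : g ^ (k %% p.-1) = g ^ k %[mod p].
Proof.
have [_ [g_order _]] := g_prim.
rewrite [in RHS](divn_eq k p.-1) mulnC expnD expnM -modnMml.
by rewrite -(modnXm _ p (g ^ p.-1)) g_order modnXm exp1n modnMml mul1n.
Qed.

Lemma primitive_root_expn_inj i j :
  i < p.-1 -> j < p.-1 -> g ^ i = g ^ j %[mod p] -> i = j.
Proof.
have [g_coprime [_ g_min]] := g_prim.
wlog le_ij : i j / i <= j => [hwlog i_lt j_lt eq_ij|].
  by case/orP: (leq_total i j) => ?; [|symmetry]; apply: hwlog.
move=> _ j_lt eq_ij; apply/eqP; rewrite eqn_leq le_ij leqNgt; apply/negP => lt_ij.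
have g_gt0 : 0 < g.
  by apply: leq_trans (leq_mod g p); rewrite -[g]expn1 primitive_root_expn_mod_gt0.
have coprime_p_gi : coprime p (g ^ i) by rewrite coprime_sym coprimeXl.
apply: (g_min (j - i)); first lia.
apply/eqP; rewrite eqn_mod_dvd ?expn_gt0 ?g_gt0 //.
rewrite -(Gauss_dvdr _ coprime_p_gi) mulnBr muln1 -expnD subnKC //.
by rewrite -eqn_mod_dvd ?(leq_pexp2l g_gt0 le_ij) // eq_ij.
Qed.

Lemma primitive_root_expn_surj x :
  0 < x < p -> exists2 j, j < p.-1 & g ^ j %% p = x.
Proof.
move=> x_range.
set pows := [seq g ^ j %% p | j <- iota 0 p.-1].
have pows_uniq : uniq pows.
  rewrite map_inj_in_uniq ?iota_uniq // => i j; rewrite !mem_iota.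
  exact: primitive_root_expn_inj.
have pows_sub : {subset pows <= iota 1 p.-1}.
  move=> _ /mapP[j _ ->]; rewrite mem_iota primitive_root_expn_mod_gt0 add1n.
  by rewrite prednK ?ltn_pmod ?prime_gt0.
have pows_size : size (iota 1 p.-1) <= size pows by rewrite size_map !size_iota.
have [_ pows_eq] := uniq_min_size pows_uniq pows_sub pows_size.
have : x \in pows by rewrite pows_eq mem_iota; lia.
by case/mapP => j; rewrite mem_iota => /andP[_ j_lt] ->; exists j.
Qed.

Lemma gamma_seq_period_congr v r : is_cyc_period p.-1 (gamma_seq p g v) r ->
  forall x, 0 < x < p -> x * (g ^ r %% p) %% p = x %[mod v].
Proof.
move=> [_ r_period] x /primitive_root_expn_surj[j j_lt <-].
by rewrite modnMm -expnD -primitive_root_expn_modp; apply: r_period.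
Qed.

End PrimitiveRoot.

Theorem theorem7 (p v g : nat) :
  prime p -> odd p -> 1 < v < p.-1 -> 2 <= g <= p.-1 ->
  primitive_root_mod p g ->
  least_cyc_period p.-1 (gamma_seq p g v) p.-1.
Proof.
move=> p_prime _ v_range _ g_prim.
have p_gt1 := prime_gt1 p_prime.
split.
  split; first lia.
  by move=> i i_lt; rewrite modnDr modn_small.
move=> r r_period; rewrite leqNgt; apply/negP => r_lt.
have [r_gt0 _] := r_period.
have [_ [_ g_min]] := g_prim.
apply: (g_min r); first by rewrite r_gt0 r_lt.
have v_ndvd_p : ~~ (v %| p) by apply/(prime_nt_dvdP p_prime); lia.
have gr_range : 0 < g ^ r %% p < p.
  by rewrite primitive_root_expn_mod_gt0 ?ltn_pmod ?prime_gt0.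
have congr := gamma_seq_period_congr p_prime g_prim r_period.
by rewrite (muln_modp_congr_modv_eq1 v_ndvd_p gr_range congr) modn_small.
Qed.
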